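(* Let $X$ be a smooth complex algebraic variety, $f\in\mathcal{O}_X(X)$ nonzero, $\pi\colon X\times\mathbb{C}\to X$ the projection, and $\alpha\in\mathbb{Q}$. Define $\tau_\alpha\colon\pi_*V^\alpha\iota_+\mathcal{O}_X\to\mathcal{M}(f^{-\alpha})$ by $$\tau_\alpha\Big(\sum_{i=0}^pv_i\partial_t^i\delta\Big)=\Big(\sum_{i=0}^pQ_i(\alpha)\frac{v_i}{f^i}\Big)f^{-\alpha},\qquad Q_i(x)=\prod_{j=0}^{i-1}(x+j),\ Q_0=1.$$ Then $\tau_\alpha$ is a morphism of $\mathscr{D}_X$-modules, and, identifying $\mathcal{M}(f^{-\alpha})$ with $\mathcal{M}(f^{-\alpha-1})$ via $wf^{-\alpha}\mapsto(wf)f^{-\alpha-1}$, we have $\tau_{\alpha+1}(tv)=\tau_\alpha(v)$ for every $v\in V^\alpha\iota_+\mathcal{O}_X$ and $\tau_\alpha(\partial_tv)=\alpha\,\tau_{\alpha+1}(v)$ for every $v\in V^{\alpha+1}\iota_+\mathcal{O}_X$.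
   Context: $\iota\colon X\to X\times\mathbb{C}$ is the graph embedding of $f$, $t$ the coordinate on $\mathbb{C}$; $\iota_+\mathcal{O}_X=\bigoplus_{i\ge0}\mathcal{O}_X\partial_t^i\delta$ uniquely, $\delta$ the class of $1/(f-t)$, with $t(v\partial_t^i\delta)=fv\partial_t^i\delta-iv\partial_t^{i-1}\delta$ and $P(v\partial_t^i\delta)=P(v)\partial_t^i\delta-P(f)v\partial_t^{i+1}\delta$ for derivations $P$. $(V^\beta)_{\beta\in\mathbb{Q}}$ is the decreasing Kashiwara–Malgrange $V$-filtration along $t=0$ (with $tV^\beta\subseteq V^{\beta+1}$, $\partial_tV^\beta\subseteq V^{\beta-1}$). $\mathcal{M}(f^{-\alpha})=\mathcal{O}_X[1/f]f^{-\alpha}$, free of rank one over $\mathcal{O}_X[1/f]$, with $P(wf^{-\alpha})=(P(w)-\alpha wP(f)/f)f^{-\alpha}$. *)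

(* Local algebraic model of the sheaf-theoretic statement:
   O = O_X(U) (sections over a connected affine open), viewed inside its
   fraction field L (char 0); derivations of O_X extended to L. *)
From HB Require Import structures.
From mathcomp Require Import all_boot all_order all_algebra.
Set Implicit Arguments. Unset Strict Implicit. Unset Printing Implicit Defensive.
Import Order.TTheory GRing.Theory Num.Theory.
Local Open Scope ring_scope.

Section Defs.
Variable L : fieldType.

Definition is_subring (O : pred L) : Prop :=
  [/\ 0 \in O, 1 \in O,
      (forall a b, a \in O -> b \in O -> a - b \in O)
    & (forall a b, a \in O -> b \in O -> a * b \in O)].

(* P is a derivation of L preserving O (a vector field on X) *)
Definition is_der (O : pred L) (P : L -> L) : Prop :=
  [/\ (forall a b, P (a + b) = P a + P b),
      (forall a b, P (a * b) = P a * b + a * P b)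
    & (forall a, a \in O -> P a \in O)].

(* Elements of iota_+ O_X : sum_i v_i d_t^i delta  <->  polynomial sum_i v_i X^i *)
Definition coefs_in (O : pred L) (p : {poly L}) : Prop :=
  forall i, p`_i \in O.

(* action of t : t(v d_t^i delta) = f v d_t^i delta - i v d_t^(i-1) delta *)
Definition t_act (f : L) (p : {poly L}) : {poly L} :=
  \poly_(i < size p) (f * p`_i - (i.+1)%:R * p`_i.+1).

Definition dt_act (p : {poly L}) : {poly L} := p * 'X.

(* action of a derivation P : P(v d_t^i delta) = P(v) d_t^i delta - P(f) v d_t^(i+1) delta *)
Definition der_act (P : L -> L) (f : L) (p : {poly L}) : {poly L} :=
  map_poly P p - (P f) *: (p * 'X).

(* action of a derivation on M(f^-alpha): element w f^-alpha is represented by w *)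
Definition Mder_act (P : L -> L) (f : L) (a : rat) (w : L) : L :=
  P w - ratr a * w * P f / f.

Definition Qpoly (i : nat) (x : L) : L := \prod_(j < i) (x + j%:R).

(* tau_alpha (sum v_i d_t^i delta) = (sum Q_i(alpha) v_i / f^i) f^-alpha,
   returned as the coefficient of f^-alpha *)
Definition tau (a : rat) (f : L) (p : {poly L}) : L :=
  \sum_(i < size p) Qpoly i (ratr a) * p`_i / f ^+ i.

(* Axioms of the (decreasing) V-filtration listed in the paper's context:
   each V^b is a D_X-submodule of iota_+ O_X, the family is decreasing,
   t V^b \subset V^(b+1), d_t V^b \subset V^(b-1). *)
Definition is_Vfilt (O : pred L) (f : L) (V : rat -> pred {poly L}) : Prop :=
  (forall b p, p \in V b -> coefs_in O p) /\
      (forall b, 0 \in V b) /\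
      (forall b p q, p \in V b -> q \in V b -> p + q \in V b) /\
      (forall b g p, g \in O -> p \in V b -> g *: p \in V b) /\
      (forall b P p, is_der O P -> p \in V b -> der_act P f p \in V b) /\
      (forall b c p, (b <= c)%R -> p \in V c -> p \in V b) /\
      (forall b p, p \in V b -> t_act f p \in V (b + 1)%R) /\
      (forall b p, p \in V b -> dt_act p \in V (b - 1)%R).

End Defs.

From mathcomp Require Import all_boot all_order all_algebra.
From mathcomp Require Import ring.
Set Implicit Arguments. Unset Strict Implicit. Unset Printing Implicit Defensive.
Import Order.TTheory GRing.Theory Num.Theory.
Local Open Scope ring_scope.

(* All five assertions are formal identities, valid for every
   polynomial, so the V-filtration only restricts their domain. *)

Section Pochhammer.
Variable L : fieldType.

Lemma QpolySr (x : L) i : Qpoly i.+1 x = Qpoly i x * (x + i%:R).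
Proof. by rewrite /Qpoly big_ord_recr. Qed.

Lemma QpolySl (x : L) i : Qpoly i.+1 x = x * Qpoly i (x + 1).
Proof.
rewrite /Qpoly big_ord_recl addr0; congr (_ * _); apply: eq_bigr => j _.
by rewrite lift0 -nat1r addrA.
Qed.

(* The shift identity behind tau_{alpha+1}(t v) = f tau_alpha(v). *)
Lemma Qpoly_shift (x : L) i :
  Qpoly i (x + 1) - i%:R * Qpoly i.-1 (x + 1) = Qpoly i x.
Proof.
case: i => [|i]; first by rewrite mul0r subr0 /Qpoly !big_ord0.
by rewrite QpolySr (QpolySl x i) /= -nat1r; ring.
Qed.

End Pochhammer.

Section Derivation.
Variables (L : fieldType) (P : L -> L).
Hypothesis Padd : forall a b, P (a + b) = P a + P b.
Hypothesis Pmul : forall a b, P (a * b) = P a * b + a * P b.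

Lemma der0 : P 0 = 0.
Proof. by apply: (addrI (P 0)); rewrite -Padd !addr0. Qed.

Lemma derN x : P (- x) = - P x.
Proof. by apply/eqP; rewrite -addr_eq0 -Padd addNr der0. Qed.

Lemma der1 : P 1 = 0.
Proof.
have P11 := Pmul 1 1; rewrite !mulr1 mul1r in P11.
by apply: (addrI (P 1)); rewrite addr0 -P11.
Qed.

Lemma der_sum I (r : seq I) (F : I -> L) :
  P (\sum_(i <- r) F i) = \sum_(i <- r) P (F i).
Proof. exact: (big_morph P Padd der0). Qed.

Lemma derV x : x != 0 -> P x^-1 = - (P x * x^-1 * x^-1).
Proof.
move=> nzx; have := Pmul x x^-1; rewrite mulfV // der1 => /esym/eqP.
rewrite addr_eq0 => /eqP xPV.
have -> : P x^-1 = x^-1 * (x * P x^-1) by rewrite mulrA mulVf ?mul1r.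
by rewrite xPV; ring.
Qed.

Lemma der_ratr (a : rat) : P (ratr a) = 0.
Proof.
have der_int (z : int) : P z%:~R = 0.
  have der_nat n : P n%:R = 0.
    by elim: n => [|n IH]; rewrite ?der0 // -nat1r Padd IH der1 addr0.
  by case: z => n; rewrite ?NegzE ?mulrNz ?derN -pmulrn der_nat ?oppr0.
rewrite /ratr; have [->|nz] := eqVneq ((denq a)%:~R : L) 0; first by rewrite invr0 mulr0 der0.
by rewrite Pmul derV // !der_int !(mul0r, mulr0, oppr0, addr0).
Qed.

Lemma der_Qpoly (a : rat) i : P (Qpoly i (ratr a)) = 0.
Proof.
apply: (big_ind (fun x => P x = 0)) => [|x y Px Py|j _]; first exact: der1.
  by rewrite Pmul Px Py mulr0 mul0r addr0.
by rewrite Padd -ratr_nat der_ratr der_ratr addr0.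
Qed.

Lemma der_expV (f : L) : f != 0 ->
  forall i, P (f^-1 ^+ i) = - (i%:R * P f * f^-1 ^+ i.+1).
Proof.
move=> nzf; elim=> [|i IH]; first by rewrite expr0 der1 !mul0r oppr0.
by rewrite exprS Pmul IH derV // !exprS -nat1r; ring.
Qed.

End Derivation.

Lemma ratrD1 (L : fieldType) : [pchar L] =i pred0 ->
  forall a : rat, ratr (a + 1) = ratr a + 1 :> L.
Proof.
move=> /pcharf0P char0 a.
have intr_neq0 (z : int) : z != 0 -> (z%:~R : L) != 0.
  case: z => n nz; last by rewrite NegzE mulrNz oppr_eq0 -pmulrn char0.
  by rewrite -pmulrn char0; apply: contra nz => /eqP ->.
have den_neq0 (b : rat) : ((denq b)%:~R : L) != 0 by apply/intr_neq0/denq_neq0.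
have cross : numq (a + 1) * denq a = (numq a + denq a) * denq (a + 1).
  by apply: (intr_inj (R := rat)); rewrite !intrM intrD !numqE; ring.
apply: (mulIf (den_neq0 (a + 1))); apply: (mulIf (den_neq0 a)).
rewrite /ratr divfK // -intrM cross intrM intrD.
by field; apply: den_neq0.
Qed.

Section Tau.
Context {L : fieldType} {f : L}.

Lemma tauE (a : rat) (p : {poly L}) n : (size p <= n)%N ->
  tau a f p = \sum_(i < n) Qpoly i (ratr a) * p`_i * f^-1 ^+ i.
Proof.
move=> le_pn; rewrite /tau (big_ord_widen n (fun i => Qpoly i (ratr a) * p`_i / f ^+ i) le_pn).
rewrite big_mkcond /=; apply: eq_bigr => i _; rewrite exprVn.
by case: ltnP => // le_p_i; rewrite nth_default // mulr0 mul0r.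
Qed.

Lemma tauD a p q : tau a f (p + q) = tau a f p + tau a f q.
Proof.
have le_pq := size_polyD p q.
rewrite (tauE _ le_pq) (tauE _ (leq_maxl (size p) (size q))).
rewrite (tauE _ (leq_maxr (size p) (size q))).
by rewrite -big_split; apply: eq_bigr => i _; rewrite coefD mulrDr mulrDl.
Qed.

Lemma tauZ a g p : tau a f (g *: p) = g * tau a f p.
Proof.
rewrite !(tauE _ (size_scale_leq g p)) (tauE _ (leqnn _)) mulr_sumr.
by apply: eq_bigr => i _; rewrite coefZ; ring.
Qed.

Lemma tauB a p q : tau a f (p - q) = tau a f p - tau a f q.
Proof. by rewrite tauD -scaleN1r tauZ mulN1r. Qed.

Lemma tau_mulX a p : tau a f (p * 'X) =
  \sum_(i < size p) Qpoly i.+1 (ratr a) * p`_i * f^-1 ^+ i.+1.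
Proof.
have le_pX : (size (p * 'X)%R <= (size p).+1)%N.
  by have [->|nz] := eqVneq p 0; rewrite ?mul0r ?size_poly0 ?size_mulX.
rewrite (tauE _ le_pX) big_ord_recl coefMX mulr0 mul0r add0r.
by apply: eq_bigr => i _; rewrite coefMX.
Qed.

Lemma tau_deriv a p : f != 0 -> tau a f p^`() =
  f * \sum_(i < size p) i%:R * Qpoly i.-1 (ratr a) * p`_i * f^-1 ^+ i.
Proof.
move=> nzf; have le_dp : (size p^`() <= (size p).-1)%N by exact: size_poly.
case: (size p) le_dp => [|n] le_dn; first by rewrite (tauE _ le_dn) !big_ord0 mulr0.
rewrite (tauE _ le_dn) big_ord_recl !(mul0r, add0r) mulr_sumr.
apply: eq_bigr => i _; rewrite lift0 coef_deriv -[p`_i.+1 *+ _]mulr_natr /= exprS.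
by field.
Qed.

Lemma tau_map a (P : L -> L) p : P 0 = 0 -> tau a f (map_poly P p) =
  \sum_(i < size p) Qpoly i (ratr a) * P p`_i * f^-1 ^+ i.
Proof.
move=> P0; rewrite (tauE _ (size_poly _ _)).
by apply: eq_bigr => i _; rewrite coef_map_id0.
Qed.

End Tau.

Lemma t_actE (L : fieldType) (f : L) p : t_act f p = f *: p - p^`().
Proof.
apply/polyP => i; rewrite coef_poly coefB coefZ coef_deriv mulr_natl.
case: ltnP => // le_pi.
by rewrite !nth_default ?(leq_trans le_pi) // mulr0 mul0rn subr0.
Qed.

Section Morphism.
Variables (L : fieldType) (f : L).
Hypothesis nzf : f != 0.

Lemma tau_der (P : L -> L) a p :
  (forall a b, P (a + b) = P a + P b) ->
  (forall a b, P (a * b) = P a * b + a * P b) ->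
  tau a f (der_act P f p) = Mder_act P f a (tau a f p).
Proof.
move=> Padd Pmul; have P0 : P 0 = 0 := der0 Padd.
rewrite /der_act tauB tauZ (tau_map _ _ P0) tau_mulX (tauE _ (leqnn _)).
rewrite /Mder_act (der_sum Padd) !mulr_sumr !mulr_suml -!sumrB.
apply: eq_bigr => i _.
rewrite !Pmul (der_Qpoly Padd Pmul) (der_expV Pmul nzf) QpolySr exprS.
by field.
Qed.

Hypothesis char0 : [pchar L] =i pred0.

Lemma tau_t a p : tau (a + 1) f (t_act f p) = f * tau a f p.
Proof.
rewrite t_actE tauB tauZ tau_deriv // -mulrBr; congr (f * _).
rewrite !(tauE _ (leqnn _)) -sumrB; apply: eq_bigr => i _.
by rewrite ratrD1 // -(Qpoly_shift (ratr a)); ring.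
Qed.

Lemma tau_dt a p : tau a f (dt_act p) = ratr a * (tau (a + 1) f p / f).
Proof.
rewrite /dt_act tau_mulX (tauE _ (leqnn _)) mulr_suml mulr_sumr.
by apply: eq_bigr => i _; rewrite QpolySl ratrD1 // exprS; field.
Qed.

End Morphism.

Theorem mainTheorem15 (L : fieldType) (O : pred L) (f : L) (alpha : rat)
    (V : rat -> pred {poly L}) :
  [pchar L] =i pred0 ->
  is_subring O -> f \in O -> f != 0 ->
  is_Vfilt O f V ->
  (* tau_alpha is a morphism of D_X-modules on V^alpha *)
  [/\ (forall p q, p \in V alpha -> q \in V alpha ->
         tau alpha f (p + q) = tau alpha f p + tau alpha f q),
      (forall g p, g \in O -> p \in V alpha ->
         tau alpha f (g *: p) = g * tau alpha f p),
      (forall P p, is_der O P -> p \in V alpha ->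
         tau alpha f (der_act P f p) = Mder_act P f alpha (tau alpha f p)),
  (* tau_{alpha+1}(t v) = tau_alpha(v) under w f^-alpha |-> (w f) f^-alpha-1 *)
      (forall p, p \in V alpha ->
         tau (alpha + 1) f (t_act f p) = f * tau alpha f p)
  (* tau_alpha(d_t v) = alpha tau_{alpha+1}(v), w' f^-alpha-1 |-> (w'/f) f^-alpha *)
    & (forall p, p \in V (alpha + 1) ->
         tau alpha f (dt_act p) = ratr alpha * (tau (alpha + 1) f p / f))].
Proof.
move=> char0 _ _ nzf _; split.
- by move=> p q _ _; exact: tauD.
- by move=> g p _ _; exact: tauZ.
- by move=> P p [Padd Pmul _] _; exact: tau_der.
- by move=> p _; exact: tau_t.
- by move=> p _; exact: tau_dt.
Qed.
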